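(* $$\bigcup_{P\in S^n}\overline{\mathcal{H}_{\rm Wulff}(S^n,P)}=\overline{\mathcal{H}_{\mbox{s-conv}}(S^n)}.$$
   Context: $S^n$ is the unit sphere in $\mathbb{R}^{n+1}$, $n\ge1$; $|PQ|=\arccos(P\cdot Q)$. $H(P)=\{Q\in S^n:P\cdot Q\ge0\}$. $\mathcal{H}(S^n)$ is the set of non-empty closed subsets of $S^n$ with the Pompeiu-Hausdorff metric $h(A,B)=\max\{\max_{x\in A}\min_{y\in B}|xy|,\ \max_{y\in B}\min_{x\in A}|xy|\}$. A subset is hemispherical if it is disjoint from $H(Q)$ for some $Q\in S^n$. For $A,B$ in a hemispherical set, the arc $AB=\{((1-t)A+tB)/\|(1-t)A+tB\|:0\le t\le1\}$; a hemispherical set $W$ is spherical convex if $AB\subset W$ for all $A,B\in W$, and a spherical convex body if moreover it is closed and has an interior point. For $P\in S^n$, $\mathcal{H}_{\rm Wulff}(S^n,P)$ is the set of $W\in\mathcal{H}(S^n)$ with $W\cap H(-P)=\emptyset$, $P$ an interior point of $W$, and $W$ a spherical convex body. $\mathcal{H}_{\mbox{s-conv}}(S^n)$ is the set of non-empty closed spherical convex subsets of $S^n$. Overlines denote closures in $(\mathcal{H}(S^n),h)$. *)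

From Stdlib Require Import Reals.
Open Scope R_scope.

(* Points of R^{n+1} are represented as functions nat -> R; a point of S^n
   has all coordinates of index > n equal to 0, so the representation is
   canonical. *)
Definition point := nat -> R.

Definition dot (n : nat) (P Q : point) : R := sum_f_R0 (fun i => P i * Q i) n.

Definition on_sphere (n : nat) (P : point) : Prop :=
  dot n P P = 1 /\ forall i, (n < i)%nat -> P i = 0.

Definition sdist (n : nat) (P Q : point) : R := acos (dot n P Q).

Definition pset := point -> Prop.

Definition Hhalf (n : nat) (P : point) : pset :=
  fun Q => on_sphere n Q /\ dot n P Q >= 0.

Definition opp (P : point) : point := fun i => - P i.

Definition closed_sub (n : nat) (A : pset) : Prop :=
  (forall x, A x -> on_sphere n x) /\
  forall x, on_sphere n x ->
    (forall eps, eps > 0 -> exists y, A y /\ sdist n x y < eps) -> A x.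

Definition in_HS (n : nat) (A : pset) : Prop :=
  (exists x, A x) /\ closed_sub n A.

(* Pompeiu-Hausdorff metric, relationally: h n A B r  <->  h(A,B) = r *)
Definition is_max (S : R -> Prop) (r : R) : Prop :=
  S r /\ forall s, S s -> s <= r.
Definition is_min (S : R -> Prop) (r : R) : Prop :=
  S r /\ forall s, S s -> r <= s.
Definition pt_set_min (n : nat) (x : point) (B : pset) (d : R) : Prop :=
  is_min (fun s => exists y, B y /\ s = sdist n x y) d.
Definition hdist (n : nat) (A B : pset) (r : R) : Prop :=
  exists r1 r2,
    is_max (fun s => exists x, A x /\ pt_set_min n x B s) r1 /\
    is_max (fun s => exists y, B y /\ pt_set_min n y A s) r2 /\
    r = Rmax r1 r2.

Definition hemispherical (n : nat) (W : pset) : Prop :=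
  exists Q, on_sphere n Q /\ forall x, W x -> ~ Hhalf n Q x.

Definition vnorm (n : nat) (v : point) : R := sqrt (dot n v v).

Definition arc (n : nat) (A B : point) : pset :=
  fun X => exists t, 0 <= t <= 1 /\
    X = (fun i => ((1 - t) * A i + t * B i) /
                  vnorm n (fun j => (1 - t) * A j + t * B j)).

Definition s_convex (n : nat) (W : pset) : Prop :=
  hemispherical n W /\ forall A B, W A -> W B -> forall X, arc n A B X -> W X.

Definition interior_point (n : nat) (W : pset) (P : point) : Prop :=
  W P /\ exists eps, eps > 0 /\
    forall Q, on_sphere n Q -> sdist n P Q < eps -> W Q.

Definition s_convex_body (n : nat) (W : pset) : Prop :=
  s_convex n W /\ closed_sub n W /\ exists P, interior_point n W P.

Definition H_Wulff (n : nat) (P : point) (W : pset) : Prop :=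
  in_HS n W /\ (forall x, W x -> ~ Hhalf n (opp P) x) /\
  interior_point n W P /\ s_convex_body n W.

Definition H_sconv (n : nat) (W : pset) : Prop :=
  (exists x, W x) /\ closed_sub n W /\ s_convex n W.

Definition hclosure (n : nat) (F : pset -> Prop) (W : pset) : Prop :=
  in_HS n W /\
  forall eps, eps > 0 -> exists V r, F V /\ hdist n V W r /\ r < eps.

From Stdlib Require Import Reals Lra Lia Psatz ClassicalEpsilon Classical FunctionalExtensionality.
Open Scope R_scope.

(* Wulff shapes are closed spherical convex sets, which gives one inclusion.  Conversely, if
   W is a Hausdorff limit of closed spherical convex sets V, then W is closed under arcs, and
   limits of poles of the V (points with positive inner product with all of V) give a point
   P of W with P.w >= 0 on W.  For c close to 1, relaxing the support inequalities of W and
   cutting down to a cap around P yields a Wulff shape with respect to P within Hausdorff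
   distance acos c of W. *)

Definition vsub (u v : point) : point := fun i => u i - v i.

Lemma dot_comm n u v : dot n u v = dot n v u.
Proof. unfold dot; induction n; simpl; [ring | rewrite IHn; ring]. Qed.

Lemma dot_combl n a b u v w :
  dot n (fun i => a * u i + b * v i) w = a * dot n u w + b * dot n v w.
Proof. unfold dot; induction n; simpl; [ring | rewrite IHn; ring]. Qed.

Lemma dot_combr n a b u v w :
  dot n w (fun i => a * u i + b * v i) = a * dot n w u + b * dot n w v.
Proof. rewrite dot_comm, dot_combl, (dot_comm n u), (dot_comm n v); ring. Qed.

Lemma dot_addl n u v w : dot n (fun i => u i + v i) w = dot n u w + dot n v w.
Proof. unfold dot; induction n; simpl; [ring | rewrite IHn; ring]. Qed.

Lemma dot_subl n u v w : dot n (vsub u v) w = dot n u w - dot n v w.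
Proof. unfold dot, vsub; induction n; simpl; [ring | rewrite IHn; ring]. Qed.

Lemma dot_subr n u v w : dot n w (vsub u v) = dot n w u - dot n w v.
Proof. rewrite dot_comm, dot_subl, (dot_comm n u), (dot_comm n v); ring. Qed.

Lemma dot_scall n a u w : dot n (fun i => a * u i) w = a * dot n u w.
Proof. unfold dot; induction n; simpl; [ring | rewrite IHn; ring]. Qed.

Lemma dot_scalr n a u w : dot n w (fun i => a * u i) = a * dot n w u.
Proof. rewrite dot_comm, dot_scall, dot_comm; ring. Qed.

Lemma dot_oppl n u w : dot n (opp u) w = - dot n u w.
Proof. unfold dot, opp; induction n; simpl; [ring | rewrite IHn; ring]. Qed.

Lemma dot_self_ge0 n u : 0 <= dot n u u.
Proof. unfold dot; induction n; simpl; nra. Qed.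

Lemma quadratic_ge0_discriminant a b c :
  0 <= c -> (forall t, 0 <= a - 2 * t * b + t * t * c) -> b * b <= a * c.
Proof.
  intros Hc H. destruct (Req_dec c 0) as [->|Hc0].
  - destruct (Req_dec b 0) as [->|Hb]; [lra|].
    specialize (H ((a + 1) / (2 * b))).
    replace (a - 2 * ((a + 1) / (2 * b)) * b + (a + 1) / (2 * b) * ((a + 1) / (2 * b)) * 0)
      with (-1) in H by (field; auto). lra.
  - specialize (H (b / c)).
    replace (a - 2 * (b / c) * b + b / c * (b / c) * c) with ((a * c - b * b) / c) in H
      by (field; lra).
    assert (0 <= (a * c - b * b) / c * c) by nra.
    replace ((a * c - b * b) / c * c) with (a * c - b * b) in H0 by (field; lra). lra.
Qed.

Lemma cauchy_schwarz n u v : dot n u v * dot n u v <= dot n u u * dot n v v.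
Proof.
  apply quadratic_ge0_discriminant; [apply dot_self_ge0|]. intro t.
  pose proof (dot_self_ge0 n (fun i => 1 * u i + (- t) * v i)) as H.
  rewrite dot_combl, !dot_combr, (dot_comm n v u) in H. lra.
Qed.

Lemma vnorm_ge0 n u : 0 <= vnorm n u.
Proof. apply sqrt_pos. Qed.

Lemma vnorm_sq n u : vnorm n u * vnorm n u = dot n u u.
Proof. apply sqrt_sqrt, dot_self_ge0. Qed.

Lemma vnorm_le n u c : 0 <= c -> dot n u u <= c * c -> vnorm n u <= c.
Proof. intros. unfold vnorm. rewrite <- (sqrt_square c) by auto. apply sqrt_le_1_alt; auto. Qed.

Lemma vnorm_lt n u c : 0 <= c -> dot n u u < c * c -> vnorm n u < c.
Proof.
  intros. unfold vnorm. rewrite <- (sqrt_square c) by auto.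
  apply sqrt_lt_1_alt; split; auto. apply dot_self_ge0.
Qed.

Lemma abs_dot_le n u v : Rabs (dot n u v) <= vnorm n u * vnorm n v.
Proof.
  pose proof (cauchy_schwarz n u v). rewrite <- (vnorm_sq n u), <- (vnorm_sq n v) in H.
  pose proof (vnorm_ge0 n u). pose proof (vnorm_ge0 n v).
  apply Rsqr_incr_0_var; [|nra]. unfold Rsqr. rewrite <- Rabs_mult, Rabs_right by nra. nra.
Qed.

Lemma dot_le_vnorm n u v : dot n u v <= vnorm n u * vnorm n v.
Proof. eapply Rle_trans; [apply Rle_abs | apply abs_dot_le]. Qed.

Lemma vnorm_triangle n u v : vnorm n (fun i => u i + v i) <= vnorm n u + vnorm n v.
Proof.
  pose proof (vnorm_ge0 n u); pose proof (vnorm_ge0 n v).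
  apply vnorm_le; [lra|].
  rewrite dot_addl, !(dot_comm n _ (fun i => u i + v i)), !dot_addl, (dot_comm n v u).
  pose proof (vnorm_sq n u); pose proof (vnorm_sq n v); pose proof (dot_le_vnorm n u v). nra.
Qed.

Lemma vnorm_scal n a u : vnorm n (fun i => a * u i) = Rabs a * vnorm n u.
Proof.
  unfold vnorm. rewrite dot_scall, dot_scalr.
  replace (a * (a * dot n u u)) with (Rsqr a * dot n u u) by (unfold Rsqr; ring).
  rewrite sqrt_mult_alt, sqrt_Rsqr_abs by apply Rle_0_sqr. reflexivity.
Qed.

Lemma vnorm_sub_comm n x y : vnorm n (vsub x y) = vnorm n (vsub y x).
Proof. unfold vnorm. f_equal. rewrite !dot_subl, !dot_subr, (dot_comm n x y). ring. Qed.

Lemma vnorm_sub_triangle n x y z : vnorm n (vsub x z) <= vnorm n (vsub x y) + vnorm n (vsub y z).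
Proof.
  replace (vsub x z) with (fun i => vsub x y i + vsub y z i)
    by (apply functional_extensionality; intro; unfold vsub; ring).
  apply vnorm_triangle.
Qed.

Lemma vnorm_diff_le n u u' : Rabs (vnorm n u - vnorm n u') <= vnorm n (vsub u u').
Proof.
  apply Rabs_le. pose proof (vnorm_sub_triangle n u u' (fun _ => 0)).
  pose proof (vnorm_sub_triangle n u' u (fun _ => 0)). rewrite (vnorm_sub_comm n u' u) in H0.
  replace (vsub u (fun _ => 0)) with u in * by (apply functional_extensionality; intro; unfold vsub; ring).
  replace (vsub u' (fun _ => 0)) with u' in * by (apply functional_extensionality; intro; unfold vsub; ring).
  lra.
Qed.

Lemma Rabs_le_between a b : Rabs a <= b -> - b <= a <= b.
Proof. unfold Rabs; destruct Rcase_abs; lra. Qed.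

Definition lipschitz n (f : point -> R) C := forall x y, Rabs (f x - f y) <= C * vnorm n (vsub x y).

Lemma dot_lipschitz n v : lipschitz n (dot n v) (vnorm n v).
Proof. intros x y. rewrite <- dot_subr. apply abs_dot_le. Qed.

(** * The sphere *)

Lemma vnorm_sphere n x : on_sphere n x -> vnorm n x = 1.
Proof. intros [H _]. unfold vnorm. rewrite H. apply sqrt_1. Qed.

Lemma sphere_dot_bound n x y : on_sphere n x -> on_sphere n y -> -1 <= dot n x y <= 1.
Proof. intros [Hx _] [Hy _]. pose proof (cauchy_schwarz n x y). rewrite Hx, Hy in H. nra. Qed.

Lemma sphere_chord_sq n x y : on_sphere n x -> on_sphere n y ->
  dot n (vsub x y) (vsub x y) = 2 - 2 * dot n x y.
Proof. intros [Hx _] [Hy _]. rewrite dot_subl, !dot_subr, Hx, Hy, (dot_comm n y x). ring. Qed.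

Lemma sphere_chord_le2 n x y : on_sphere n x -> on_sphere n y -> vnorm n (vsub x y) <= 2.
Proof.
  intros Hx Hy. apply vnorm_le; [lra|]. rewrite sphere_chord_sq by auto.
  pose proof (sphere_dot_bound n x y Hx Hy). lra.
Qed.

Lemma sphere_lipschitz n u : on_sphere n u -> lipschitz n (dot n u) 1.
Proof. intros Hu. rewrite <- (vnorm_sphere n u Hu). apply dot_lipschitz. Qed.

Lemma opp_sphere n P : on_sphere n P -> on_sphere n (opp P).
Proof.
  intros [H1 H2]. split.
  - rewrite dot_oppl, dot_comm, dot_oppl, H1. ring.
  - intros i Hi. unfold opp. rewrite H2 by auto. ring.
Qed.

Lemma antipodal_dot n x w y : on_sphere n x -> on_sphere n w -> dot n x w = -1 ->
  dot n y w = - dot n y x.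
Proof.
  intros [Hx _] [Hw _] Hc.
  assert (Hz : dot n (fun i => x i + w i) (fun i => x i + w i) = 0).
  { rewrite dot_addl, !(dot_comm n _ (fun i => x i + w i)), !dot_addl, Hx, Hw, (dot_comm n w x).
    lra. }
  pose proof (cauchy_schwarz n y (fun i => x i + w i)) as H. rewrite Hz in H.
  rewrite (dot_comm n y), dot_addl, (dot_comm n x), (dot_comm n w) in H. nra.
Qed.

Lemma dot_gt_neg1_of_pos n A B v : on_sphere n A -> on_sphere n B ->
  0 < dot n v A -> 0 < dot n v B -> -1 < dot n A B.
Proof.
  intros HA HB H1 H2. destruct (sphere_dot_bound n A B HA HB) as [Hl _].
  destruct (Req_dec (dot n A B) (-1)) as [E|]; [|lra].
  rewrite (antipodal_dot n A B v HA HB E) in H2. lra.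
Qed.

Lemma acos_le_acos a b : -1 <= a -> a <= b -> b <= 1 -> acos b <= acos a.
Proof.
  intros. destruct (Req_dec a b) as [->|Hne]; [lra|].
  destruct (Rle_lt_dec (acos b) (acos a)) as [|Hl]; auto.
  pose proof (acos_bound a); pose proof (acos_bound b).
  assert (Hc : cos (acos b) < cos (acos a)) by (apply cos_decreasing_1; lra).
  rewrite !cos_acos in Hc by lra. lra.
Qed.

Lemma lt_of_acos_lt a b : -1 <= a <= 1 -> -1 <= b <= 1 -> acos a < acos b -> b < a.
Proof.
  intros. destruct (Rlt_le_dec b a); auto.
  assert (acos b <= acos a) by (apply acos_le_acos; lra). lra.
Qed.

Lemma acos_gt0 a : -1 <= a < 1 -> 0 < acos a.
Proof.
  intros. pose proof (acos_bound a). destruct (Req_dec (acos a) 0) as [E|]; [|lra].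
  apply (f_equal cos) in E. rewrite cos_acos, cos_0 in E by lra. lra.
Qed.

Lemma acos_near1 eps : 0 < eps -> exists c, 0 < c < 1 /\ acos c < eps.
Proof.
  intros He. set (e := Rmin eps 1 / 2).
  assert (He' : 0 < e < eps /\ e <= 1 / 2) by (unfold e, Rmin; destruct Rle_dec; lra).
  pose proof PI2_1.
  assert (Hc : acos (cos e) = e) by (apply acos_cos; lra).
  assert (0 < cos e) by (apply cos_gt_0; lra).
  assert (cos e < 1).
  { destruct (COS_bound e) as [_ H1]. destruct (Req_dec (cos e) 1) as [E|]; [|lra].
    rewrite E, acos_1 in Hc. lra. }
  exists (cos e). lra.
Qed.

(** [arc_of_chord a] is the spherical distance of two points at chordal distance [a]. *)
Definition arc_of_chord a := acos (1 - a * a / 2).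

Lemma arc_of_chord_gt0 a : 0 < a <= 2 -> 0 < arc_of_chord a.
Proof. intros. apply acos_gt0. nra. Qed.

Lemma chord_lt_of_sdist_lt n x y a : on_sphere n x -> on_sphere n y -> 0 < a <= 2 ->
  sdist n x y < arc_of_chord a -> vnorm n (vsub x y) < a.
Proof.
  intros Hx Hy Ha Hs. apply lt_of_acos_lt in Hs; [|apply sphere_dot_bound; auto | nra].
  apply vnorm_lt; [lra|]. rewrite sphere_chord_sq by auto. lra.
Qed.

Lemma sdist_lt_of_chord_small n eps : 0 < eps -> exists a, 0 < a <= 2 /\
  forall x y, on_sphere n x -> on_sphere n y -> vnorm n (vsub x y) < a -> sdist n x y < eps.
Proof.
  intros He. destruct (acos_near1 eps He) as [c [Hc Hce]].
  set (a := sqrt (2 * (1 - c))).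
  assert (Haa : a * a = 2 * (1 - c)) by (apply sqrt_sqrt; lra).
  assert (Ha : 0 < a) by (apply sqrt_lt_R0; lra).
  exists a. split; [nra|]. intros x y Hx Hy Hxy.
  pose proof (vnorm_sq n (vsub x y)). pose proof (vnorm_ge0 n (vsub x y)).
  rewrite sphere_chord_sq in H by auto.
  pose proof (sphere_dot_bound n x y Hx Hy).
  assert (acos (dot n x y) <= acos c) by (apply acos_le_acos; nra).
  unfold sdist. lra.
Qed.

(** * Compactness of the sphere *)

Definition increasing (phi : nat -> nat) := forall k, (phi k < phi (S k))%nat.

Lemma increasing_ge phi : increasing phi -> forall k, (k <= phi k)%nat.
Proof. intros H k; induction k; [lia|]. specialize (H k); lia. Qed.

Lemma increasing_le phi : increasing phi -> forall a b, (a <= b)%nat -> (phi a <= phi b)%nat.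
Proof. intros H a b Hab; induction Hab; [lia|]. specialize (H m); lia. Qed.

Lemma increasing_comp phi psi : increasing phi -> increasing psi ->
  increasing (fun k => phi (psi k)).
Proof.
  intros Hphi Hpsi k. pose proof (increasing_le phi Hphi _ _ (Hpsi k)).
  specialize (Hphi (psi k)). lia.
Qed.

Lemma Un_cv_subseq (a : nat -> R) l phi : increasing phi -> Un_cv a l ->
  Un_cv (fun k => a (phi k)) l.
Proof.
  intros Hp Hc eps He. destruct (Hc eps He) as [N HN]. exists N. intros k Hk.
  apply HN. pose proof (increasing_ge phi Hp k). lia.
Qed.

Lemma inv_succ_lt b : 0 < b -> exists N, forall k, (N <= k)%nat -> / (INR k + 1) < b.
Proof.
  intros Hb. destruct (archimed_cor1 b Hb) as [N [HN HN0]]. exists N. intros k Hk.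
  assert (/ (INR k + 1) <= / INR N); [|lra].
  apply Rinv_le_contravar; [apply lt_0_INR; lia|]. apply le_INR in Hk. lra.
Qed.

Lemma bounded_subseq_cv (u : nat -> R) : (forall k, Rabs (u k) <= 1) ->
  exists phi l, increasing phi /\ Un_cv (fun k => u (phi k)) l.
Proof.
  intros Hb.
  destruct (Bolzano_Weierstrass u (fun c => -1 <= c <= 1) (compact_P3 (-1) 1)) as [l Hl].
  { intro k. apply Rabs_le_between, Hb. }
  assert (Hp : forall N m : nat, exists p, (N <= p)%nat /\ Rabs (u p - l) < / (INR m + 1)).
  { intros N m.
    assert (Hpos : 0 < / (INR m + 1)) by (apply Rinv_0_lt_compat; pose proof (pos_INR m); lra).
    destruct (Hl (disc l (mkposreal _ Hpos)) N) as [p Hp].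
    - exists (mkposreal _ Hpos). intros y Hy; exact Hy.
    - exists p; exact Hp. }
  set (g := fun N m => proj1_sig (constructive_indefinite_description _ (Hp N m))).
  assert (Hg : forall N m, (N <= g N m)%nat /\ Rabs (u (g N m) - l) < / (INR m + 1))
    by (intros N m; unfold g; destruct constructive_indefinite_description; auto).
  set (phi := fix phi k := match k with O => g O O | S k' => g (S (phi k')) k end).
  assert (Hphi : forall k, Rabs (u (phi k) - l) < / (INR k + 1))
    by (destruct k; [apply (Hg 0%nat 0%nat) | apply Hg]).
  exists phi, l. split.
  - intro k. simpl. destruct (Hg (S (phi k)) (S k)). lia.
  - intros eps He. destruct (inv_succ_lt eps He) as [N HN]. exists N. intros k Hk.
    specialize (HN k Hk). specialize (Hphi k). unfold R_dist. lra.
Qed.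

Lemma bounded_subseq_cv_coords (d : nat) (x : nat -> point) :
  (forall k i, Rabs (x k i) <= 1) ->
  exists phi L, increasing phi /\ forall i, (i < d)%nat -> Un_cv (fun k => x (phi k) i) (L i).
Proof.
  intros Hb. induction d as [|d IH].
  - exists (fun k => k), (fun _ => 0). split; [intro; lia | intros; lia].
  - destruct IH as [phi [L [Hphi HL]]].
    destruct (bounded_subseq_cv (fun k => x (phi k) d)) as [psi [l [Hpsi Hl]]]; [intro; apply Hb|].
    exists (fun k => phi (psi k)), (fun i => if Nat.eq_dec i d then l else L i).
    split; [apply increasing_comp; auto|].
    intros i Hi. destruct (Nat.eq_dec i d) as [->|Hne]; [exact Hl|].
    apply (Un_cv_subseq (fun k => x (phi k) i)); auto. apply HL; lia.
Qed.

Lemma dot_cv n (a b : nat -> point) (A B : point) :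
  (forall i, (i <= n)%nat -> Un_cv (fun k => a k i) (A i) /\ Un_cv (fun k => b k i) (B i)) ->
  Un_cv (fun k => dot n (a k) (b k)) (dot n A B).
Proof.
  unfold dot; induction n as [|n IH]; intros H; simpl.
  - destruct (H 0%nat) as [H1 H2]; [lia|]. apply CV_mult; auto.
  - apply CV_plus; [apply IH; intros; apply H; lia|].
    destruct (H (S n)) as [H1 H2]; [lia|]. apply CV_mult; auto.
Qed.

Lemma coord_sq_le n x i : (i <= n)%nat -> x i * x i <= dot n x x.
Proof.
  unfold dot; induction n as [|n IH]; intros Hi; simpl.
  - assert (i = 0%nat) by lia; subst; lra.
  - pose proof (dot_self_ge0 n x). unfold dot in H.
    destruct (Nat.eq_dec i (S n)) as [->|Hne]; [nra|]. specialize (IH ltac:(lia)). nra.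
Qed.

Lemma sphere_coord_bound n x i : on_sphere n x -> Rabs (x i) <= 1.
Proof.
  intros [H1 H2]. apply Rabs_le. destruct (Compare_dec.le_lt_dec i n) as [Hi|Hi].
  - pose proof (coord_sq_le n x i Hi). rewrite H1 in H. nra.
  - rewrite H2 by lia. lra.
Qed.

Definition pt_cv n (x : nat -> point) L :=
  forall b, 0 < b -> exists N, forall k, (N <= k)%nat -> vnorm n (vsub (x k) L) < b.

Lemma sphere_subseq_cv n (x : nat -> point) : (forall k, on_sphere n (x k)) ->
  exists phi L, increasing phi /\ on_sphere n L /\ pt_cv n (fun k => x (phi k)) L.
Proof.
  intros Hs.
  destruct (bounded_subseq_cv_coords (S n) x) as [phi [L [Hphi HL]]];
    [intros; apply (sphere_coord_bound n); auto|].
  set (L' := fun i => if Compare_dec.le_lt_dec i n then L i else 0).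
  assert (HL' : forall i, (i <= n)%nat -> Un_cv (fun k => x (phi k) i) (L' i)).
  { intros i Hi. unfold L'. destruct Compare_dec.le_lt_dec; [apply HL; lia | lia]. }
  assert (Hcst : forall r : R, Un_cv (fun _ => r) r)
    by (intros r e He; exists O; intros; unfold R_dist; rewrite Rminus_diag, Rabs_R0; auto).
  exists phi, L'. split; [auto | split; [split|]].
  - assert (Hd : Un_cv (fun k => dot n (x (phi k)) (x (phi k))) (dot n L' L'))
      by (apply dot_cv; intros; split; auto).
    apply (UL_sequence _ _ _ Hd), (Un_cv_ext (fun _ => 1)); [|apply Hcst].
    intro k. symmetry. apply (Hs (phi k)).
  - intros i Hi. unfold L'. destruct Compare_dec.le_lt_dec; [lia | auto].
  - assert (Hd : Un_cv (fun k => dot n (vsub (x (phi k)) L') (vsub (x (phi k)) L'))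
                       (dot n (vsub L' L') (vsub L' L'))).
    { apply dot_cv. intros i Hi. unfold vsub. split; apply CV_minus; auto. }
    replace (dot n (vsub L' L') (vsub L' L')) with 0 in Hd by (rewrite dot_subl, !dot_subr; ring).
    intros b Hb. destruct (Hd (b * b) ltac:(nra)) as [N HN]. exists N. intros k Hk.
    specialize (HN k Hk). unfold R_dist in HN. rewrite Rminus_0_r in HN.
    apply vnorm_lt; [lra|]. eapply Rle_lt_trans; [apply Rle_abs | exact HN].
Qed.

Lemma subseq_late n (x : nat -> point) phi L b : increasing phi -> pt_cv n (fun k => x (phi k)) L ->
  0 < b -> exists k, vnorm n (vsub (x (phi k)) L) < b /\ / (INR (phi k) + 1) < b.
Proof.
  intros Hphi Hc Hb. destruct (Hc b Hb) as [N1 HN1]. destruct (inv_succ_lt b Hb) as [N2 HN2].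
  exists (Nat.max N1 N2). split; [apply HN1; lia|].
  apply HN2. pose proof (increasing_ge phi Hphi (Nat.max N1 N2)). lia.
Qed.

Lemma closed_sub_near n K x : closed_sub n K -> on_sphere n x ->
  (forall a, 0 < a -> exists y, K y /\ vnorm n (vsub x y) < a) -> K x.
Proof.
  intros [HK1 HK2] Hx Hnear. apply HK2; auto. intros eps He.
  destruct (sdist_lt_of_chord_small n eps He) as [a [Ha Hsd]].
  destruct (Hnear a ltac:(lra)) as [y [Hy Hxy]]. exists y. auto.
Qed.

Lemma ge_of_lipschitz_near n f C a x : 0 <= C -> lipschitz n f C ->
  (forall b, 0 < b -> exists y, vnorm n (vsub x y) < b /\ a <= f y) -> a <= f x.
Proof.
  intros HC Hf Hnear. apply Rnot_lt_le. intro Hlt.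
  set (g := a - f x). set (b := g / (C + 1)).
  assert (Hbg : b * (C + 1) = g) by (unfold b; field; lra).
  assert (Hb : 0 < b) by (unfold b, g; apply Rdiv_lt_0_compat; lra).
  destruct (Hnear b Hb) as [y [Hxy Hy]].
  specialize (Hf x y). apply Rabs_le_between in Hf.
  pose proof (vnorm_ge0 n (vsub x y)).
  assert (C * vnorm n (vsub x y) <= C * b) by (apply Rmult_le_compat_l; lra).
  unfold g in *. nra.
Qed.

Lemma chord_near_of_sdist_near n K x : (forall y, K y -> on_sphere n y) -> on_sphere n x ->
  (forall eps, eps > 0 -> exists y, K y /\ sdist n x y < eps) ->
  forall b, 0 < b -> exists y, K y /\ vnorm n (vsub x y) < b.
Proof.
  intros HK Hx Hnear b Hb. set (a := Rmin b 2).
  assert (Ha : 0 < a <= 2) by (unfold a; split; [apply Rmin_glb_lt | apply Rmin_r]; lra).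
  destruct (Hnear (arc_of_chord a) (arc_of_chord_gt0 a Ha)) as [y [Hy Hxy]].
  exists y. split; auto. pose proof (Rmin_l b 2).
  pose proof (chord_lt_of_sdist_lt n x y a Hx (HK y Hy) Ha Hxy). unfold a in *. lra.
Qed.

Lemma lipschitz_subseq_ge n f C (y : nat -> point) phi L s : 0 <= C -> lipschitz n f C ->
  increasing phi -> pt_cv n (fun k => y (phi k)) L ->
  (forall k, s - / (INR k + 1) < f (y k)) -> s <= f L.
Proof.
  intros HC Hf Hphi Hcv Hy. apply Rnot_lt_le. intro Hlt.
  set (g := s - f L). set (b := g / (2 * C + 2)).
  assert (Hbg : b * (2 * C + 2) = g) by (unfold b; field; lra).
  assert (Hb : 0 < b) by (unfold b, g; apply Rdiv_lt_0_compat; lra).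
  destruct (subseq_late n y phi L b Hphi Hcv Hb) as [k [Hk1 Hk2]].
  pose proof (Hf (y (phi k)) L). pose proof (Rle_abs (f (y (phi k)) - f L)).
  pose proof (vnorm_ge0 n (vsub (y (phi k)) L)).
  assert (C * vnorm n (vsub (y (phi k)) L) <= C * b) by (apply Rmult_le_compat_l; lra).
  specialize (Hy (phi k)). unfold g in *. nra.
Qed.

Lemma lipschitz_max_attained n K f C : closed_sub n K -> (exists x, K x) -> 0 <= C ->
  lipschitz n f C -> exists y0, K y0 /\ forall y, K y -> f y <= f y0.
Proof.
  intros HK [y1 Hy1] HC Hf.
  set (E := fun r => exists y, K y /\ r = f y).
  assert (Hb : bound E).
  { exists (f y1 + 2 * C). intros r [y [Hy ->]].
    pose proof (Hf y y1). pose proof (sphere_chord_le2 n y y1 (proj1 HK y Hy) (proj1 HK y1 Hy1)).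
    pose proof (Rle_abs (f y - f y1)). nra. }
  destruct (completeness E Hb (ex_intro _ (f y1) (ex_intro _ y1 (conj Hy1 eq_refl))))
    as [s [Hs_ub Hs_least]].
  assert (Hk : forall k : nat, exists y, K y /\ s - / (INR k + 1) < f y).
  { intro k. apply NNPP. intro Hn.
    assert (0 < / (INR k + 1)) by (apply Rinv_0_lt_compat; pose proof (pos_INR k); lra).
    assert (is_upper_bound E (s - / (INR k + 1))).
    { intros r [y [Hy ->]]. apply Rnot_lt_le. intro Hl. apply Hn. exists y; auto. }
    specialize (Hs_least _ H0). lra. }
  set (y := fun k => proj1_sig (constructive_indefinite_description _ (Hk k))).
  assert (Hy : forall k, K (y k) /\ s - / (INR k + 1) < f (y k))
    by (intro k; unfold y; destruct constructive_indefinite_description; auto).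
  destruct (sphere_subseq_cv n y) as [phi [L [Hphi [HL Hcv]]]]; [intro; apply HK, Hy|].
  exists L. split.
  - apply (closed_sub_near n K L HK HL). intros a Ha.
    destruct (Hcv a Ha) as [N HN]. exists (y (phi N)). split; [apply Hy|].
    rewrite vnorm_sub_comm. apply HN; lia.
  - intros z Hz. apply Rle_trans with s; [apply Hs_ub; exists z; auto|].
    apply (lipschitz_subseq_ge n f C y phi); auto. intro k; apply Hy.
Qed.

Lemma lipschitz_min_attained n K f C : closed_sub n K -> (exists x, K x) -> 0 <= C ->
  lipschitz n f C -> exists y0, K y0 /\ forall y, K y -> f y0 <= f y.
Proof.
  intros HK Hne HC Hf.
  destruct (lipschitz_max_attained n K (fun x => - f x) C HK Hne HC) as [y0 [H1 H2]].
  - intros x y. replace (- f x - - f y) with (- (f x - f y)) by ring. rewrite Rabs_Ropp. apply Hf.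
  - exists y0; split; auto. intros y Hy; specialize (H2 y Hy); lra.
Qed.

(** * Hausdorff distance *)

Definition closest n (B : pset) (x : point) : point :=
  epsilon (inhabits x) (fun y0 => B y0 /\ forall y, B y -> dot n x y <= dot n x y0).

Lemma closest_spec n B x : closed_sub n B -> (exists y, B y) ->
  B (closest n B x) /\ forall y, B y -> dot n x y <= dot n x (closest n B x).
Proof.
  intros HB Hne. apply (epsilon_spec (inhabits x) (fun y0 => B y0 /\ _)).
  apply (lipschitz_max_attained n B (dot n x) (vnorm n x)); auto.
  - apply vnorm_ge0.
  - apply dot_lipschitz.
Qed.

Section Closest.
Variables (n : nat) (A B : pset).
Hypotheses (HA : closed_sub n A) (HB : closed_sub n B) (HBne : exists y, B y).

Lemma closest_dot_lipschitz : lipschitz n (fun x => dot n x (closest n B x)) 1.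
Proof.
  intros x x'.
  destruct (closest_spec n B x HB HBne) as [Hx1 Hx2].
  destruct (closest_spec n B x' HB HBne) as [Hx1' Hx2'].
  pose proof (Hx2 _ Hx1'). pose proof (Hx2' _ Hx1).
  pose proof (sphere_lipschitz n _ (proj1 HB _ Hx1) x x').
  pose proof (sphere_lipschitz n _ (proj1 HB _ Hx1') x x').
  rewrite !(dot_comm n (closest n B x)), !(dot_comm n (closest n B x')) in *.
  apply Rabs_le. apply Rabs_le_between in H1. apply Rabs_le_between in H2. lra.
Qed.

Lemma closest_dot_bound x : A x -> -1 <= dot n x (closest n B x) <= 1.
Proof. intros Hx. apply sphere_dot_bound; [apply HA | apply HB, closest_spec]; auto. Qed.

Lemma pt_set_min_closest x : A x -> pt_set_min n x B (sdist n x (closest n B x)).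
Proof.
  intros Hx. destruct (closest_spec n B x HB HBne) as [Hc1 Hc2]. split.
  - exists (closest n B x). auto.
  - intros s [y [Hy ->]]. apply acos_le_acos; auto.
    + apply sphere_dot_bound; [apply HA | apply HB]; auto.
    + apply closest_dot_bound; auto.
Qed.

Lemma excess_le_acos c : (exists x, A x) -> -1 <= c ->
  (forall x, A x -> exists y, B y /\ c <= dot n x y) ->
  exists r, is_max (fun s => exists x, A x /\ pt_set_min n x B s) r /\ r <= acos c.
Proof.
  intros HAne Hc Hnear.
  destruct (lipschitz_min_attained n A _ 1 HA HAne ltac:(lra) closest_dot_lipschitz)
    as [x0 [Hx0 Hmin]].
  exists (sdist n x0 (closest n B x0)). split; [split|].
  - exists x0. split; auto. apply pt_set_min_closest; auto.
  - intros s [x [Hx Hs]].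
    assert (s = sdist n x (closest n B x)) as ->.
    { apply Rle_antisym; [apply Hs | apply (pt_set_min_closest x Hx)];
        [exists (closest n B x); split; [apply closest_spec | ] | apply Hs]; auto. }
    apply acos_le_acos; [apply closest_dot_bound; auto | apply Hmin; auto |].
    apply closest_dot_bound; auto.
  - destruct (Hnear x0 Hx0) as [y [Hy Hcy]].
    pose proof (proj2 (closest_spec n B x0 HB HBne) y Hy).
    apply acos_le_acos; [lra | lra | apply closest_dot_bound; auto].
Qed.

End Closest.

Lemma hdist_le_acos n A B c : closed_sub n A -> closed_sub n B ->
  (exists x, A x) -> (exists y, B y) -> -1 <= c ->
  (forall x, A x -> exists y, B y /\ c <= dot n x y) ->
  (forall y, B y -> exists x, A x /\ c <= dot n y x) ->
  exists r, hdist n A B r /\ r <= acos c.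
Proof.
  intros HA HB HAne HBne Hc H1 H2.
  destruct (excess_le_acos n A B HA HB HBne c) as [r1 [Hr1 Hr1c]]; auto.
  destruct (excess_le_acos n B A HB HA HAne c) as [r2 [Hr2 Hr2c]]; auto.
  exists (Rmax r1 r2). split; [exists r1, r2; auto|].
  unfold Rmax; destruct Rle_dec; lra.
Qed.

Lemma hdist_near n V W r a : closed_sub n V -> closed_sub n W ->
  (exists x, V x) -> (exists x, W x) -> hdist n V W r -> 0 < a <= 2 -> r < arc_of_chord a ->
  (forall v, V v -> exists w, W w /\ vnorm n (vsub v w) < a) /\
  (forall w, W w -> exists v, V v /\ vnorm n (vsub w v) < a).
Proof.
  intros HV HW HVne HWne [r1 [r2 [[_ Hr1] [[_ Hr2] ->]]]] Ha Hr.
  pose proof (Rmax_l r1 r2). pose proof (Rmax_r r1 r2). split.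
  - intros v Hv. exists (closest n W v). split; [apply closest_spec; auto|].
    apply chord_lt_of_sdist_lt; [apply HV | apply HW, closest_spec | |]; auto.
    assert (sdist n v (closest n W v) <= r1); [|lra].
    apply Hr1. exists v. split; auto. apply (pt_set_min_closest n V W); auto.
  - intros w Hw. exists (closest n V w). split; [apply closest_spec; auto|].
    apply chord_lt_of_sdist_lt; [apply HW | apply HV, closest_spec | |]; auto.
    assert (sdist n w (closest n V w) <= r2); [|lra].
    apply Hr2. exists w. split; auto. apply (pt_set_min_closest n W V); auto.
Qed.

(** * Arcs *)

Definition comb (A B : point) t : point := fun i => (1 - t) * A i + t * B i.

Definition normalize n (u : point) : point := fun i => u i / vnorm n u.

Definition arcpt n (A B : point) t : point := normalize n (comb A B t).

Definition arc_closed n (W : pset) := forall A B t, W A -> W B -> -1 < dot n A B ->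
  0 <= t <= 1 -> W (arcpt n A B t).

Section Arcs.
Variables (n : nat) (A B : point) (t : R).
Hypotheses (HA : on_sphere n A) (HB : on_sphere n B) (Ht : 0 <= t <= 1).

Lemma dot_comb_self : dot n (comb A B t) (comb A B t) = 1 - 2 * t * (1 - t) * (1 - dot n A B).
Proof. unfold comb. rewrite dot_combl, !dot_combr, (proj1 HA), (proj1 HB), (dot_comm n B A). ring. Qed.

Lemma comb_weight_bounds : 0 <= t * (1 - t) /\ t * (1 - t) <= 1 / 4.
Proof. split; [nra|]. pose proof (pow2_ge_0 (t - 1 / 2)). nra. Qed.

Lemma vnorm_comb_le : vnorm n (comb A B t) <= 1 - t * (1 - t) * (1 - dot n A B).
Proof.
  pose proof (sphere_dot_bound n A B HA HB). destruct comb_weight_bounds.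
  apply vnorm_le; [nra|]. rewrite dot_comb_self.
  pose proof (pow2_ge_0 (t * (1 - t) * (1 - dot n A B))). nra.
Qed.

Lemma vnorm_comb_le1 : vnorm n (comb A B t) <= 1.
Proof.
  pose proof vnorm_comb_le. pose proof (sphere_dot_bound n A B HA HB).
  destruct comb_weight_bounds. nra.
Qed.

Hypothesis HAB : -1 < dot n A B.

Lemma vnorm_comb_gt0 : 0 < vnorm n (comb A B t).
Proof.
  apply Rnot_le_lt. intro H. pose proof (vnorm_ge0 n (comb A B t)).
  assert (E : vnorm n (comb A B t) = 0) by lra. pose proof (vnorm_sq n (comb A B t)).
  rewrite E, dot_comb_self in H1. destruct comb_weight_bounds.
  pose proof (sphere_dot_bound n A B HA HB). nra.
Qed.

Lemma dot_arcpt_scaled v :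
  dot n v (arcpt n A B t) * vnorm n (comb A B t) = (1 - t) * dot n v A + t * dot n v B.
Proof.
  pose proof vnorm_comb_gt0.
  replace (arcpt n A B t) with (fun i => / vnorm n (comb A B t) * comb A B t i)
    by (apply functional_extensionality; intro; unfold arcpt, normalize, Rdiv; ring).
  set (N := vnorm n (comb A B t)) in *.
  rewrite dot_scalr. unfold comb. rewrite dot_combr. field. lra.
Qed.

Lemma arcpt_sphere : on_sphere n (arcpt n A B t).
Proof.
  pose proof vnorm_comb_gt0. split.
  - replace (arcpt n A B t) with (fun i => / vnorm n (comb A B t) * comb A B t i)
      by (apply functional_extensionality; intro; unfold arcpt, normalize, Rdiv; ring).
    rewrite dot_scall, dot_scalr, <- vnorm_sq. field. lra.
  - intros i Hi. unfold arcpt, normalize, comb. rewrite (proj2 HA i Hi), (proj2 HB i Hi). unfold Rdiv; ring.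
Qed.

(** A linear functional bounded below by [a >= 0] at the ends stays so along the arc,
    since normalization only divides by [vnorm (comb A B t) <= 1]. *)
Lemma dot_arcpt_ge v a : 0 <= a -> a <= dot n v A -> a <= dot n v B ->
  a <= dot n v (arcpt n A B t).
Proof.
  intros Ha HvA HvB. pose proof vnorm_comb_gt0. pose proof vnorm_comb_le1.
  pose proof (dot_arcpt_scaled v). nra.
Qed.

Lemma dot_arcpt_start : dot n A B >= 0 -> 1 - t <= dot n A (arcpt n A B t).
Proof.
  intros H. pose proof vnorm_comb_gt0. pose proof vnorm_comb_le1.
  pose proof (dot_arcpt_scaled A) as E. rewrite (proj1 HA) in E. nra.
Qed.

End Arcs.

Lemma dot_arcpt_end n A B t : on_sphere n A -> on_sphere n B -> 0 <= t <= 1 ->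
  dot n A B >= 0 -> t <= dot n B (arcpt n A B t).
Proof.
  intros HA HB Ht H. pose proof (sphere_dot_bound n A B HA HB).
  assert (HBA : -1 < dot n B A) by (rewrite dot_comm; lra).
  replace (arcpt n A B t) with (arcpt n B A (1 - t)).
  - replace t with (1 - (1 - t)) at 1 by ring. apply dot_arcpt_start; auto; [lra|].
    rewrite dot_comm; auto.
  - apply functional_extensionality. intro i. unfold arcpt, normalize, comb.
    replace (fun i => (1 - (1 - t)) * B i + (1 - t) * A i) with (fun i => (1 - t) * A i + t * B i)
      by (apply functional_extensionality; intro; ring).
    f_equal. ring.
Qed.

Lemma sconv_arc_closed n V : s_convex n V -> arc_closed n V.
Proof. intros [_ H] A B t HA HB _ Ht. apply (H A B HA HB). exists t; auto. Qed.

Lemma le0_of_le_small_multiples d q : 0 <= q -> (forall t, 0 < t <= 1 -> d <= t * q) -> d <= 0.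
Proof.
  intros Hq H. apply Rnot_lt_le. intro Hd.
  set (t := d / (d + q)).
  assert (Ht : t * (d + q) = d) by (unfold t; field; lra).
  assert (Ht0 : 0 < t) by (unfold t; apply Rdiv_lt_0_compat; lra).
  assert (Ht1 : t <= 1) by nra.
  specialize (H t (conj Ht0 Ht1)). nra.
Qed.

(** First-order condition at a maximizer of [dot y] on an arc-closed set: moving from [x0]
    towards [w] along the arc may not increase [dot y]. *)
Lemma arc_closed_argmax_dot_le n W y x0 : (forall w, W w -> on_sphere n w) -> arc_closed n W ->
  W x0 -> (forall w, W w -> dot n y w <= dot n y x0) -> 0 <= dot n y x0 ->
  forall w, W w -> dot n y w <= dot n y x0 * dot n x0 w.
Proof.
  intros Hs Ha Hx0 Hmax Hm w Hw. assert (Hx0s := Hs x0 Hx0). assert (Hws := Hs w Hw).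
  destruct (sphere_dot_bound n x0 w Hx0s Hws) as [Hc1 Hc2].
  set (m := dot n y x0) in *. set (c := dot n x0 w) in *.
  destruct (Rle_lt_dec c (-1)) as [Hle|Hc'].
  - assert (Hc : c = -1) by lra.
    rewrite (antipodal_dot n x0 w y Hx0s Hws Hc). fold m. rewrite Hc. lra.
  -     assert (Hkey : forall t, 0 < t <= 1 -> dot n y w - m * c <= t * (m * (1 - c))).
    { intros t Ht. assert (Ht' : 0 <= t <= 1) by lra.
      pose proof (Hmax _ (Ha x0 w t Hx0 Hw Hc' Ht')) as Hle.
      pose proof (dot_arcpt_scaled n x0 w t Hx0s Hws Ht' Hc' y) as E. fold m in E.
      pose proof (vnorm_comb_gt0 n x0 w t Hx0s Hws Ht' Hc').
      pose proof (vnorm_comb_le n x0 w t Hx0s Hws Ht'). fold c in H0.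
      assert (Hnum : (1 - t) * m + t * dot n y w <= m * (1 - t * (1 - t) * (1 - c))) by nra.
      assert (t * (dot n y w - m * c - t * (m * (1 - c))) <= 0) by nra. nra. }
    enough (dot n y w - m * c <= 0) by lra.
    apply (le0_of_le_small_multiples _ (m * (1 - c))); [nra | exact Hkey].
Qed.

Lemma vnorm_normalize_sub n u u' : 0 < vnorm n u -> 0 < vnorm n u' ->
  vnorm n (vsub (normalize n u) (normalize n u')) <= 2 * vnorm n (vsub u u') / vnorm n u.
Proof.
  intros HN HN'. set (N := vnorm n u) in *. set (N' := vnorm n u') in *.
  replace (vsub (normalize n u) (normalize n u'))
    with (fun i => (fun j => / N * vsub u u' j) i + (fun j => (N' - N) / N * normalize n u' j) i)
    by (apply functional_extensionality; intro; unfold vsub, normalize; fold N N'; field; lra).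
  eapply Rle_trans; [apply vnorm_triangle|].
  rewrite !vnorm_scal, (Rabs_right (/ N)) by (left; apply Rinv_0_lt_compat; lra).
  assert (Hn : vnorm n (normalize n u') = 1).
  { replace (normalize n u') with (fun i => / N' * u' i)
      by (apply functional_extensionality; intro; unfold normalize; fold N'; field; lra).
    rewrite vnorm_scal, Rabs_right by (left; apply Rinv_0_lt_compat; lra). fold N'. field. lra. }
  rewrite Hn. unfold Rdiv. rewrite Rabs_mult, (Rabs_right (/ N)) by (left; apply Rinv_0_lt_compat; lra).
  pose proof (vnorm_diff_le n u' u). rewrite vnorm_sub_comm in H. fold N N' in H.
  assert (0 < / N) by (apply Rinv_0_lt_compat; lra). nra.
Qed.

Lemma vnorm_comb_sub_le n A B A' B' t : 0 <= t <= 1 ->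
  vnorm n (vsub (comb A B t) (comb A' B' t)) <= (1 - t) * vnorm n (vsub A A') + t * vnorm n (vsub B B').
Proof.
  intros Ht. replace (vsub (comb A B t) (comb A' B' t))
    with (fun i => (fun j => (1 - t) * vsub A A' j) i + (fun j => t * vsub B B' j) i)
    by (apply functional_extensionality; intro; unfold vsub, comb; ring).
  eapply Rle_trans; [apply vnorm_triangle|]. rewrite !vnorm_scal, !Rabs_right by lra. lra.
Qed.

Lemma convex_comb_lt a b s t : a < s -> b < s -> 0 <= t <= 1 -> (1 - t) * a + t * b < s.
Proof.
  intros Ha Hb Ht. destruct (Req_dec t 1) as [->|Ht1]; [lra|].
  assert ((1 - t) * a < (1 - t) * s) by (apply Rmult_lt_compat_l; lra).
  assert (t * b <= t * s) by (apply Rmult_le_compat_l; lra). lra.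
Qed.

Lemma arcpt_continuous n A B t b : on_sphere n A -> on_sphere n B -> -1 < dot n A B ->
  0 <= t <= 1 -> 0 < b ->
  exists s, 0 < s /\ forall A' B', vnorm n (vsub A A') < s -> vnorm n (vsub B B') < s ->
    vnorm n (vsub (arcpt n A B t) (arcpt n A' B' t)) < b.
Proof.
  intros HA HB Hc Ht Hb. pose proof (vnorm_comb_gt0 n A B t HA HB Ht Hc) as HN.
  set (N := vnorm n (comb A B t)) in *.
  exists (N * Rmin (1 / 2) (b / 2)). split; [apply Rmult_lt_0_compat; [|apply Rmin_glb_lt]; lra|].
  intros A' B' HA' HB'. pose proof (Rmin_l (1 / 2) (b / 2)) as Hs1.
  pose proof (Rmin_r (1 / 2) (b / 2)) as Hs2.
  assert (Hs : N * Rmin (1 / 2) (b / 2) <= N / 2 /\ N * Rmin (1 / 2) (b / 2) <= N * (b / 2))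
    by (split; nra).
  set (s := N * Rmin (1 / 2) (b / 2)) in *. destruct Hs as [HsN Hsb].
  assert (Hd : vnorm n (vsub (comb A B t) (comb A' B' t)) < s).
  { eapply Rle_lt_trans; [apply vnorm_comb_sub_le; auto | apply convex_comb_lt; auto]. }
  assert (HN' : 0 < vnorm n (comb A' B' t)).
  { pose proof (vnorm_diff_le n (comb A B t) (comb A' B' t)) as H.
    apply Rabs_le_between in H. fold N in H. nra. }
  eapply Rle_lt_trans; [apply vnorm_normalize_sub; auto|]. fold N.
  apply Rmult_lt_reg_r with N; [lra|]. unfold Rdiv. rewrite Rmult_assoc, Rinv_l by lra. nra.
Qed.

(** * Limits of spherical convex sets *)

Lemma hclosure_sconv_arc_closed n W : hclosure n (H_sconv n) W -> arc_closed n W.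
Proof.
  intros [[HWne HW] Happ] A B t HA HB Hc Ht.
  assert (HAs := proj1 HW A HA). assert (HBs := proj1 HW B HB).
  apply (closed_sub_near n W); [auto | apply arcpt_sphere; auto |]. intros a Ha.
  destruct (arcpt_continuous n A B t (a / 2) HAs HBs Hc Ht ltac:(lra)) as [s [Hs Hcont]].
  set (a' := Rmin s (Rmin (a / 2) 2)).
  assert (Ha' : 0 < a' <= 2 /\ a' <= s /\ a' <= a / 2).
  { unfold a'. pose proof (Rmin_l s (Rmin (a / 2) 2)). pose proof (Rmin_r s (Rmin (a / 2) 2)).
    pose proof (Rmin_l (a / 2) 2). pose proof (Rmin_r (a / 2) 2).
    repeat split; try lra. repeat apply Rmin_glb_lt; lra. }
  destruct Ha' as [Ha'2 [Ha's Ha'a]].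
  destruct (Happ (arc_of_chord a') (arc_of_chord_gt0 a' Ha'2)) as [V [r [[HVne [HV HVc]] [Hd Hr]]]].
  destruct (hdist_near n V W r a' HV HW HVne HWne Hd Ha'2 Hr) as [HVW HWV].
  destruct (HWV A HA) as [A' [HA' HAA']]. destruct (HWV B HB) as [B' [HB' HBB']].
  assert (HX' : V (arcpt n A' B' t)) by (apply (proj2 HVc A' B' HA' HB'); exists t; auto).
  destruct (HVW _ HX') as [y [Hy HX'y]].
  exists y. split; auto.
  pose proof (vnorm_sub_triangle n (arcpt n A B t) (arcpt n A' B' t) y).
  assert (vnorm n (vsub (arcpt n A B t) (arcpt n A' B' t)) < a / 2) by (apply Hcont; lra).
  lra.
Qed.

Lemma sconv_pole n V : H_sconv n V -> exists P, V P /\ forall v, V v -> 0 < dot n P v.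
Proof.
  intros [HVne [HV [[Q [HQ HQV]] Hconv]]].
  assert (Hpos : forall v, V v -> 0 < dot n (opp Q) v).
  { intros v Hv. rewrite dot_oppl. apply Ropp_0_gt_lt_contravar, Rnot_le_gt.
    intro Hle. apply (HQV v Hv). split; [apply HV | lra]; auto. }
  destruct (closest_spec n V (opp Q) HV HVne) as [HP Hmax].
  set (P := closest n V (opp Q)) in *.
  pose proof (arc_closed_argmax_dot_le n V (opp Q) P (proj1 HV) (sconv_arc_closed n V
    (conj (ex_intro _ Q (conj HQ HQV)) Hconv)) HP Hmax (Rlt_le _ _ (Hpos P HP))) as Hfo.
  exists P. split; auto. intros v Hv.
  specialize (Hfo v Hv). pose proof (Hpos v Hv). pose proof (Hpos P HP). nra.
Qed.

Lemma hclosure_sconv_near_pole n W : hclosure n (H_sconv n) W -> forall a, 0 < a <= 2 ->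
  exists P, on_sphere n P /\ (exists w, W w /\ vnorm n (vsub P w) < a) /\
    forall w, W w -> - a < dot n P w.
Proof.
  intros [[HWne HW] Happ] a Ha.
  destruct (Happ (arc_of_chord a) (arc_of_chord_gt0 a Ha)) as [V [r [HVsc [Hd Hr]]]].
  pose proof HVsc as [HVne [HV _]].
  destruct (hdist_near n V W r a HV HW HVne HWne Hd Ha Hr) as [HVW HWV].
  destruct (sconv_pole n V HVsc) as [P [HP HPpos]].
  exists P. split; [apply HV; auto | split; [apply HVW; auto |]].
  intros w Hw. destruct (HWV w Hw) as [v [Hv Hwv]].
  pose proof (sphere_lipschitz n P (proj1 HV P HP) w v). pose proof (HPpos v Hv).
  apply Rabs_le_between in H. lra.
Qed.

Lemma hclosure_sconv_pole n W : hclosure n (H_sconv n) W ->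
  exists P, W P /\ forall w, W w -> 0 <= dot n P w.
Proof.
  intros HWcl. pose proof HWcl as [[HWne HW] _].
  assert (Hk : forall k : nat, exists P, on_sphere n P /\
     (exists w, W w /\ vnorm n (vsub P w) < / (INR k + 1)) /\
     forall w, W w -> - / (INR k + 1) < dot n P w).
  { intro k. apply hclosure_sconv_near_pole; auto.
    assert (1 <= INR k + 1) by (pose proof (pos_INR k); lra).
    split; [apply Rinv_0_lt_compat; lra|].
    apply Rle_trans with 1; [|lra]. rewrite <- Rinv_1. apply Rinv_le_contravar; lra. }
  set (Pk := fun k => proj1_sig (constructive_indefinite_description _ (Hk k))).
  assert (HPk : forall k, on_sphere n (Pk k) /\
     (exists w, W w /\ vnorm n (vsub (Pk k) w) < / (INR k + 1)) /\
     forall w, W w -> - / (INR k + 1) < dot n (Pk k) w)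
    by (intro k; unfold Pk; destruct constructive_indefinite_description; auto).
  destruct (sphere_subseq_cv n Pk) as [phi [P [Hphi [HP Hcv]]]]; [intro; apply HPk|].
  exists P. split.
  - apply (closed_sub_near n W P HW HP). intros a Ha.
    destruct (subseq_late n Pk phi P (a / 2) Hphi Hcv ltac:(lra)) as [k [Hk1 Hk2]].
    destruct (HPk (phi k)) as [_ [[w [Hw Hpw]] _]].
    exists w. split; auto.
    pose proof (vnorm_sub_triangle n P (Pk (phi k)) w). rewrite vnorm_sub_comm in Hk1. lra.
  - intros w Hw. apply Rnot_lt_le. intro Hneg.
    destruct (subseq_late n Pk phi P (- dot n P w / 2) Hphi Hcv ltac:(lra)) as [k [Hk1 Hk2]].
    destruct (HPk (phi k)) as [_ [_ Hall]]. specialize (Hall w Hw).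
    pose proof (sphere_lipschitz n w (proj1 HW w Hw) (Pk (phi k)) P).
    rewrite !(dot_comm n w) in H. apply Rabs_le_between in H. lra.
Qed.

(** * Wulff approximants *)

(** The support inequalities of [W] (one for each [u] in the unit ball nonnegative on [W])
    relaxed by [(1 - c^2) P.x], which makes [P] interior, and cut down to the cap
    [P.x >= 1 - c], which keeps the set away from [H(-P)]. *)
Definition wulff_approx n (W : pset) P c : pset := fun x =>
  on_sphere n x /\ 1 - c <= dot n P x /\
  forall u, dot n u u <= 1 -> (forall w, W w -> 0 <= dot n u w) ->
    0 <= dot n u x + (1 - c * c) * dot n P x.

Section WulffApprox.
Variables (n : nat) (W : pset) (P : point) (c : R).
Hypotheses (HW : closed_sub n W) (HWP : W P) (HPpos : forall w, W w -> 0 <= dot n P w).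
Hypotheses (Harc : arc_closed n W) (Hc : 0 < c < 1).

Let V := wulff_approx n W P c.
Let HPs : on_sphere n P := proj1 HW P HWP.

Lemma wulff_approx_of_mem x : W x -> 1 - c <= dot n P x -> V x.
Proof.
  intros Hx HPx. split; [apply HW; auto | split; auto].
  intros u _ Hu. specialize (Hu x Hx). assert (0 <= 1 - c * c) by nra. nra.
Qed.

Lemma wulff_approx_closed : closed_sub n V.
Proof.
  split; [intros x [Hx _]; auto|]. intros x Hx Hap.
  pose proof (chord_near_of_sdist_near n V x (fun y Hy => proj1 Hy) Hx Hap) as Hnear.
  split; [auto | split].
  - apply (ge_of_lipschitz_near n (dot n P) 1 (1 - c) x ltac:(lra) (sphere_lipschitz n P HPs)).
    intros b Hb. destruct (Hnear b Hb) as [y [[_ [Hy _]] Hxy]]. eauto.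
  - intros u Hu HuW.
    set (v := fun i => 1 * u i + (1 - c * c) * P i).
    assert (Hv : forall y, dot n v y = dot n u y + (1 - c * c) * dot n P y)
      by (intro y; unfold v; rewrite dot_combl; ring).
    rewrite <- Hv.
    apply (ge_of_lipschitz_near n (dot n v) (vnorm n v) 0 x (vnorm_ge0 n v) (dot_lipschitz n v)).
    intros b Hb. destruct (Hnear b Hb) as [y [[_ [_ Hy]] Hxy]].
    exists y. rewrite Hv. auto.
Qed.

Lemma wulff_approx_interior : interior_point n V P.
Proof.
  split; [apply wulff_approx_of_mem; auto; rewrite (proj1 HPs); lra|].
  set (d := 1 - c * c). assert (Hd : 0 < d < 1) by (unfold d; nra).
  set (a := Rmin (d / 2) c).
  assert (Ha : 0 < a <= 2) by (unfold a; split; [apply Rmin_glb_lt | pose proof (Rmin_r (d / 2) c)]; lra).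
  assert (Ha1 : a <= d / 2) by apply Rmin_l. assert (Ha2 : a <= c) by apply Rmin_r.
  exists (arc_of_chord a). split; [apply Rlt_gt, arc_of_chord_gt0; auto|].
  intros Q HQ HPQ. apply (chord_lt_of_sdist_lt n P Q a HPs HQ Ha) in HPQ.
  pose proof (vnorm_sq n (vsub P Q)). rewrite sphere_chord_sq in H by auto.
  pose proof (vnorm_ge0 n (vsub P Q)).
  assert (HPQ' : 1 - a * a / 2 < dot n P Q) by nra.
  split; [auto | split; [nra|]].
  intros u Hu HuW. specialize (HuW P HWP).
  pose proof (dot_lipschitz n u P Q). apply Rabs_le_between in H1.
  assert (vnorm n u <= 1) by (apply vnorm_le; lra). fold d. nra.
Qed.

Lemma wulff_approx_arc A B X : V A -> V B -> arc n A B X -> V X.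
Proof.
  intros [HA [HA1 HA2]] [HB [HB1 HB2]] [t [Ht ->]]. change (V (arcpt n A B t)).
  assert (Hab : -1 < dot n A B) by (apply (dot_gt_neg1_of_pos n A B P); auto; lra).
  split; [apply arcpt_sphere; auto | split].
  - apply dot_arcpt_ge; auto; lra.
  - intros u Hu HuW. set (v := fun i => 1 * u i + (1 - c * c) * P i).
    assert (Hv : forall y, dot n v y = dot n u y + (1 - c * c) * dot n P y)
      by (intro y; unfold v; rewrite dot_combl; ring).
    rewrite <- Hv. apply dot_arcpt_ge; auto; [lra | rewrite Hv | rewrite Hv]; auto.
Qed.

Lemma wulff_approx_avoids x : V x -> ~ Hhalf n (opp P) x.
Proof. intros [_ [H1 _]] [_ H2]. rewrite dot_oppl in H2. lra. Qed.

Lemma wulff_approx_Wulff : H_Wulff n P V.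
Proof.
  pose proof wulff_approx_interior as Hint.
  split; [split; [exists P; apply Hint | apply wulff_approx_closed]|].
  split; [apply wulff_approx_avoids | split; [auto|]].
  split; [split | split; [apply wulff_approx_closed | exists P; auto]].
  - exists (opp P). split; [apply opp_sphere; auto | apply wulff_approx_avoids].
  - intros A B HA HB X. apply wulff_approx_arc; auto.
Qed.

(** Testing [x] against [u = m w0 - x], where [w0] is the point of [W] closest to [x] and
    [m = x.w0], which is nonnegative on [W] by the first-order condition. *)
Lemma wulff_approx_near_W x : V x -> exists w, W w /\ c <= dot n x w.
Proof.
  intros [Hx [HPx Hsupp]].
  destruct (closest_spec n W x HW (ex_intro _ P HWP)) as [Hw0 Hmax].
  set (w0 := closest n W x) in *. exists w0. split; auto.
  assert (Hw0s := proj1 HW w0 Hw0).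
  pose proof (sphere_dot_bound n P x HPs Hx).
  set (m := dot n x w0) in *.
  assert (Hcc : 0 < 1 - c * c <= 1) by (split; nra).
  destruct (Rle_lt_dec m 0) as [Hm|Hm].
  - exfalso.
    assert (Hu : 0 <= dot n (opp x) x + (1 - c * c) * dot n P x).
    { apply Hsupp; [rewrite dot_oppl, dot_comm, dot_oppl, (proj1 Hx); lra|].
      intros w Hw. rewrite dot_oppl. specialize (Hmax w Hw). lra. }
    rewrite dot_oppl, (proj1 Hx) in Hu. nra.
  - set (u := fun i => m * w0 i + (-1) * x i).
    pose proof (arc_closed_argmax_dot_le n W x w0 (proj1 HW) Harc Hw0 Hmax (Rlt_le _ _ Hm)) as Hfo.
    assert (Huu : dot n u u = 1 - m * m)
      by (unfold u; rewrite dot_combl, !dot_combr, (proj1 Hx), (proj1 Hw0s), (dot_comm n w0 x);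
          fold m; ring).
    assert (Hu : 0 <= dot n u x + (1 - c * c) * dot n P x).
    { apply Hsupp; [nra|]. intros w Hw. unfold u. rewrite dot_combl.
      specialize (Hfo w Hw). fold m in Hfo. lra. }
    unfold u in Hu. rewrite dot_combl, (proj1 Hx), (dot_comm n w0 x) in Hu. fold m in Hu. nra.
Qed.

Lemma W_near_wulff_approx w : W w -> exists x, V x /\ c <= dot n w x.
Proof.
  intros Hw. assert (Hws := proj1 HW w Hw).
  assert (Ht : 0 <= 1 - c <= 1) by lra.
  assert (HwP : dot n w P >= 0) by (rewrite dot_comm; apply Rle_ge, HPpos; auto).
  exists (arcpt n w P (1 - c)).
  assert (Hc' : -1 < dot n w P) by lra.
  split.
  - apply wulff_approx_of_mem; [apply Harc; auto|].
    apply (dot_arcpt_end n w P (1 - c)); auto.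
  - replace c with (1 - (1 - c)) at 1 by ring. apply dot_arcpt_start; auto.
Qed.

Lemma wulff_approx_hdist : exists r, hdist n V W r /\ r <= acos c.
Proof.
  apply hdist_le_acos; [apply wulff_approx_closed | apply HW | | exists P; auto | lra | |].
  - exists P. apply wulff_approx_interior.
  - apply wulff_approx_near_W.
  - apply W_near_wulff_approx.
Qed.

End WulffApprox.

Theorem proposition3 (n : nat) (hn : (1 <= n)%nat) (W : pset) :
  (exists P, on_sphere n P /\ hclosure n (H_Wulff n P) W) <->
  hclosure n (H_sconv n) W.
Proof.
  split.
  - intros [P [_ [HWin Hcl]]]. split; auto. intros eps He.
    destruct (Hcl eps He) as [V [r [[[Hne Hcs] [_ [_ [Hsc _]]]] Hd]]].
    exists V, r. split; [split; [|split]|]; auto.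
  - intros Hcl. pose proof (hclosure_sconv_pole n W Hcl) as [P [HWP HPpos]].
    pose proof (hclosure_sconv_arc_closed n W Hcl) as Harc.
    destruct Hcl as [[HWne HW] _].
    exists P. split; [apply HW; auto | split; [split; auto|]].
    intros eps He. destruct (acos_near1 eps He) as [c [Hc Hce]].
    destruct (wulff_approx_hdist n W P c HW HWP HPpos Harc Hc) as [r [Hr Hrc]].
    exists (wulff_approx n W P c), r. split; [apply wulff_approx_Wulff | split]; auto; lra.
Qed.
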